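(* For $k\ge 0$ let $B_k$ denote the family of bar $k$-visibility graphs. Then for all $i,j\ge 0$ with $i\ne j$, $B_i\not\subseteq B_j$ and $B_j\not\subseteq B_i$.
   Context: A bar $k$-visibility representation is a finite collection of pairwise disjoint closed horizontal line segments (bars) in the plane; two bars are joined by a line of sight if there is a vertical segment with endpoints on the two bars intersecting at most $k$ other bars. The bar $k$-visibility graph has one vertex per bar, two vertices adjacent iff their bars are joined by a line of sight. *)

From Stdlib Require Import Reals.
From mathcomp Require Import all_boot.

Set Implicit Arguments.
Unset Strict Implicit.
Unset Printing Implicit Defensive.

(* A (non-degenerate) closed horizontal segment [bx1, bx2] x {by}. *)
Record bar : Type := Bar { by_ : R ; bx1 : R ; bx2 : R ; bar_nondeg : Rlt bx1 bx2 }.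

Definition on_bar (b : bar) (p : R * R) : Prop :=
  p.2 = by_ b /\ Rle (bx1 b) p.1 /\ Rle p.1 (bx2 b).

Definition on_vseg (x y1 y2 : R) (p : R * R) : Prop :=
  p.1 = x /\ Rle (Rmin y1 y2) p.2 /\ Rle p.2 (Rmax y1 y2).

Definition bars_disjoint (a b : bar) : Prop :=
  ~ exists p, on_bar a p /\ on_bar b p.

Definition line_of_sight (k : nat) (T : finType) (f : T -> bar) (u v : T) : Prop :=
  exists x y1 y2 : R,
    on_bar (f u) (x, y1) /\ on_bar (f v) (x, y2) /\
    exists s : seq T, size s <= k /\
      forall c : T, c != u -> c != v ->
        (exists p, on_bar (f c) p /\ on_vseg x y1 y2 p) -> c \in s.

Definition simple_graph (T : finType) (e : rel T) : Prop :=
  symmetric e /\ irreflexive e.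

(* (T, e) is a bar k-visibility graph (the class B_k, closed under isomorphism
   since the vertex type is arbitrary): there is a bar representation, one bar
   per vertex, pairwise disjoint, with adjacency = line of sight. *)
Definition bar_k_visibility_graph (k : nat) (T : finType) (e : rel T) : Prop :=
  exists f : T -> bar,
    (forall u v : T, u != v -> bars_disjoint (f u) (f v)) /\
    (forall u v : T, e u v <-> (u != v /\ line_of_sight k f u v)).

From Stdlib Require Import Reals Lra ClassicalEpsilon.
From mathcomp Require Import all_boot zify boolp.

Set Implicit Arguments.
Unset Strict Implicit.
Unset Printing Implicit Defensive.

(* The complete graph on [4j + 4] vertices is a bar
   [j]-visibility graph, realised by an explicit staggered stack of bars. It is not a bar
   [i]-visibility graph: the bars of a clique pairwise overlap, so they share a column, and
   pairing them by height rank at distance [2i + 3] yields a pair whose sight line is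
   blocked by [i + 1] bars.
   Conversely, an induced four-cycle padded with [i] further vertices is a bar
   [i]-visibility graph. In a bar [j]-visibility graph on at most [j + 3] vertices, two
   non-adjacent bars sharing a column would have their segment crossed by every other bar,
   and then a second non-adjacent pair would see each other. So both diagonals of an
   induced four-cycle have column-disjoint bars, which four intervals with cyclically
   overlapping neighbours cannot achieve. *)

Definition in_range (b : bar) (x : R) : Prop := Rle (bx1 b) x /\ Rle x (bx2 b).

Definition crosses (b : bar) (x y1 y2 : R) : Prop :=
  in_range b x /\ Rle (Rmin y1 y2) (by_ b) /\ Rle (by_ b) (Rmax y1 y2).

Lemma between_minmax (a b c : R) :
  Rle (Rmin a b) c /\ Rle c (Rmax a b) <->
  (Rle a c /\ Rle c b) \/ (Rle b c /\ Rle c a).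
Proof. rewrite /Rmin /Rmax; case: Rle_dec; lra. Qed.

Lemma meets_vsegE (b : bar) (x y1 y2 : R) :
  (exists p, on_bar b p /\ on_vseg x y1 y2 p) <-> crosses b x y1 y2.
Proof.
split => [[[px py] [[/= ey [? ?]] [/= ex ?]]] | [[? ?] ?]].
  by subst; split; [split|].
by exists (x, by_ b); do 2 split.
Qed.

Lemma in_range_convex (b : bar) (x1 x2 x : R) :
  in_range b x1 -> in_range b x2 -> Rle (Rmin x1 x2) x /\ Rle x (Rmax x1 x2) -> in_range b x.
Proof. rewrite /in_range => ? ? /between_minmax; lra. Qed.

Section Sight.

Variables (T : finType) (f : T -> bar).

Definition sight_column (k : nat) (u v : T) (x : R) : Prop :=
  [/\ in_range (f u) x, in_range (f v) x &
      exists s : seq T, size s <= k /\ forall c, c != u -> c != v ->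
        crosses (f c) x (by_ (f u)) (by_ (f v)) -> c \in s].

Lemma line_of_sightE (k : nat) (u v : T) :
  line_of_sight k f u v <-> exists x, sight_column k u v x.
Proof.
split=> [[x [y1 [y2 [[/= Ey1 [? ?]] [[/= Ey2 [? ?]] [s [? blocked]]]]]]]|].
  exists x; split => //; exists s; split => // c cu cv.
  by rewrite -Ey1 -Ey2 => /meets_vsegE; apply: blocked.
move=> [x [[? ?] [? ?] [s [? blocked]]]].
exists x, (by_ (f u)), (by_ (f v)); do 2 split => //.
by exists s; split => // c cu cv /meets_vsegE; apply: blocked.
Qed.

Lemma sight_column_sym (k : nat) (u v : T) (x : R) :
  sight_column k u v x -> sight_column k v u x.
Proof.
move=> [? ? [s [? blocked]]]; split => //; exists s; split => // c cv cu.
by rewrite /crosses Rmin_comm Rmax_comm; apply: blocked.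
Qed.

Lemma line_of_sight_sym (k : nat) (u v : T) :
  line_of_sight k f u v -> line_of_sight k f v u.
Proof. by rewrite !line_of_sightE => -[x /sight_column_sym]; exists x. Qed.

Lemma sight_column_blockers (k : nat) (u v : T) (x : R) (L : seq T) :
  sight_column k u v x -> uniq L ->
  (forall c, c \in L -> [/\ c != u, c != v & crosses (f c) x (by_ (f u)) (by_ (f v))]) ->
  size L <= k.
Proof.
move=> [_ _ [s [sz_s blocked]]] uniqL inL; apply: leq_trans sz_s.
by apply: uniq_leq_size uniqL _ => c /inL [cu cv]; apply: blocked.
Qed.

End Sight.

Lemma seq_argmax (A : eqType) (F : A -> R) (s : seq A) : 0 < size s ->
  exists2 m, m \in s & forall b, b \in s -> Rle (F b) (F m).
Proof.
elim: s => [//|a [|a' s] IH] _.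
  by exists a => [|b]; rewrite ?inE // => /eqP ->; apply: Rle_refl.
have [m ms maxm] := IH isT; case: (Rle_dec (F a) (F m)) => am.
  exists m => [|b]; first by rewrite inE ms orbT.
  by rewrite inE => /orP[/eqP -> //|/maxm].
exists a => [|b]; first by rewrite inE eqxx.
rewrite inE => /orP[/eqP ->|/maxm]; [apply: Rle_refl | lra].
Qed.

Lemma pairwise_overlap_common_column (T : finType) (f : T -> bar) :
  (forall u v, u != v -> exists x, in_range (f u) x /\ in_range (f v) x) ->
  exists x0, forall u, in_range (f u) x0.
Proof.
move=> overlap; case: (pickP (@predT T)) => [t0 _|empty].
  have [|w _ maxw] := @seq_argmax _ (fun u => bx1 (f u)) (enum T).
    by rewrite -cardE; apply/card_gt0P; exists t0.
  exists (bx1 (f w)) => u; split; first by apply: maxw; rewrite mem_enum.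
  case: (eqVneq u w) => [->|uw]; first by have := bar_nondeg (f w); lra.
  by have [x [[? ?] [? ?]]] := overlap u w uw; lra.
by exists R0 => u; have := empty u.
Qed.

Lemma bars_disjoint_heights (a b : bar) (x : R) :
  bars_disjoint a b -> in_range a x -> in_range b x -> by_ a <> by_ b.
Proof. by move=> disj ? ? eq_ab; apply: disj; exists (x, by_ a); split; split. Qed.

Lemma common_column_height_inj (T : finType) (f : T -> bar) (x0 : R) :
  (forall u v, u != v -> bars_disjoint (f u) (f v)) -> (forall u, in_range (f u) x0) ->
  injective (fun u => by_ (f u)).
Proof.
move=> disj common u v huv; apply/eqP/negPn/negP => uv.
exact: bars_disjoint_heights (disj u v uv) (common u) (common v) huv.
Qed.

Lemma sort_by_injective (T : finType) (y : T -> R) : injective y ->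
  exists s : seq T, [/\ uniq s, size s = #|T| &
    forall t0 a b, a < b < size s -> Rlt (y (nth t0 s a)) (y (nth t0 s b))].
Proof.
move=> y_inj; pose le u v := `[< Rle (y u) (y v) >].
have le_trans : transitive le by move=> v u w /asboolP ? /asboolP ?; apply/asboolP; lra.
have le_refl : reflexive le by move=> u; apply/asboolP; lra.
have le_total : total le.
  move=> u v; apply/orP; case: (Rle_or_lt (y u) (y v)) => ?; [left|right]; apply/asboolP; lra.
set s := sort le (enum T).
have size_s : size s = #|T| by rewrite size_sort cardE.
have uniq_s : uniq s by rewrite sort_uniq enum_uniq.
exists s; split => // t0 a b /andP[ab bs]; have as_ := ltn_trans ab bs.
have /asboolP le_ab : le (nth t0 s a) (nth t0 s b).
  apply: (sorted_leq_nth le_trans le_refl t0 (sort_sorted le_total _)); rewrite ?inE //.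
  exact: ltnW.
have : nth t0 s a != nth t0 s b by rewrite nth_uniq // ltn_eqF.
by case/Rle_lt_or_eq_dec: le_ab => // /y_inj ->; rewrite eqxx.
Qed.

Lemma side_extremum (xw : nat -> R) (x0 : R) (h : nat) : 0 < h ->
  exists (F : seq nat) (a0 : nat),
    [/\ uniq F, all (fun a => a < h) F, a0 \in F, h <= 2 * size F &
      forall a, a \in F -> Rle (Rmin (xw a) x0) (xw a0) /\ Rle (xw a0) (Rmax (xw a) x0)].
Proof.
move=> h_gt0; pose left_of a := `[< Rle (xw a) x0 >].
pose L := filter left_of (iota 0 h); pose Rt := filter (predC left_of) (iota 0 h).
have size_LRt : size L + size Rt = h by rewrite !size_filter count_predC size_iota.
have sub_iota (P : pred nat) : all (fun a => a < h) (filter P (iota 0 h)).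
  by apply/allP => a; rewrite mem_filter mem_iota add0n => /and3P[].
have uniq_filter (P : pred nat) : uniq (filter P (iota 0 h)) by rewrite filter_uniq ?iota_uniq.
case: (leqP (size Rt) (size L)) => sizes.
  have L_gt0 : 0 < size L by lia.
  have [//|a0 a0L max_a0] := @seq_argmax _ xw L.
  exists L, a0; split; rewrite ?uniq_filter ?sub_iota //; first by lia.
  move=> a aL; apply/between_minmax; left.
  move: a0L; rewrite mem_filter => /andP[/asboolP ? _]; split=> //; exact: max_a0.
have Rt_gt0 : 0 < size Rt by lia.
have [//|a0 a0Rt min_a0] := @seq_argmax _ (fun a => Ropp (xw a)) Rt.
exists Rt, a0; split; rewrite ?uniq_filter ?sub_iota //; first by lia.
move=> a aRt; apply/between_minmax; right.
have := min_a0 a aRt; move: a0Rt aRt; rewrite !mem_filter.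
by move=> /andP[/asboolP ? _] /andP[/asboolP ? _]; lra.
Qed.

Section CliqueBound.

Variables (k : nat) (T : finType) (g : T -> bar).

Lemma crossing_pairs_card (s : seq T) (t0 : T) (h : nat) (F : seq nat) (a0 : nat) (x : R) :
  uniq s -> 2 * h <= size s ->
  (forall a b, a < b < size s -> Rlt (by_ (g (nth t0 s a))) (by_ (g (nth t0 s b)))) ->
  uniq F -> all (fun a => a < h) F -> a0 \in F ->
  sight_column g k (nth t0 s a0) (nth t0 s (a0 + h)) x ->
  (forall a, a \in F -> in_range (g (nth t0 s a)) x /\ in_range (g (nth t0 s (a + h))) x) ->
  size F <= k.+1.
Proof.
move=> uniq_s size_s incr uniq_F /allP F_lt a0F sight in_F.
pose idx a := if a < a0 then a + h else a.
have a0h : a0 < h := F_lt a0 a0F.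
have idx_between a : a \in F -> a != a0 -> a0 < idx a < a0 + h.
  by move=> /F_lt ah ne; rewrite /idx; case: ifP => ? ; lia.
have nth_eq i j : i < size s -> j < size s -> (nth t0 s i == nth t0 s j) = (i == j).
  by move=> ? ?; rewrite nth_uniq.
have rem_F a : a \in rem a0 F -> a \in F /\ a != a0.
  by rewrite mem_rem_uniq // inE => /andP[].
have idx_inj a b : a \in F -> b \in F -> idx a = idx b -> a = b.
  by move=> /F_lt ? /F_lt ?; rewrite /idx; case: ifP; case: ifP => ? ?; lia.
suff : size [seq nth t0 s (idx a) | a <- rem a0 F] <= k.
  by rewrite size_map size_rem // -subn1 leq_subLR add1n.
apply: (sight_column_blockers sight).
  rewrite map_inj_in_uniq ?rem_uniq // => a b /rem_F[aF aa0] /rem_F[bF ba0] /eqP.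
  have := idx_between a aF aa0; have := idx_between b bF ba0.
  by move=> ? ?; rewrite nth_eq; [move=> /eqP /idx_inj; apply | lia | lia].
move=> c /mapP[a /rem_F[aF aa0] ->{c}]; have := idx_between a aF aa0 => btw.
rewrite !nth_eq; try lia; split; try by apply/eqP; lia.
split.
  by rewrite /idx; case: ifP => _; have [] := in_F a aF.
by apply/between_minmax; left; split; apply: Rlt_le; apply: incr; lia.
Qed.

Hypothesis g_disj : forall u v, u != v -> bars_disjoint (g u) (g v).
Hypothesis g_sight : forall u v, u != v -> line_of_sight k g u v.

(* Order the bars by height and pair the [a]-th lowest with the [(a + h)]-th lowest,
   [h = 2k + 3]. Of the [h] sight columns of these pairs, [k + 2] lie on the same side
   of a column [x0] common to all bars; the one closest to [x0] crosses all bars of these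
   pairs, and one bar of each other pair lies between the two bars it joins. *)
Lemma bar_visibility_clique_card : #|T| <= 4 * k + 5.
Proof.
have [x0 common] : exists x0, forall u, in_range (g u) x0.
  apply: pairwise_overlap_common_column => u v /g_sight /line_of_sightE [x [? ? _]].
  by exists x.
have [s [uniq_s size_s incr]] := sort_by_injective (common_column_height_inj g_disj common).
rewrite leqNgt; apply/negP => big; have /card_gt0P [t0 _] : 0 < #|T| by lia.
have [h h_val] : exists h, h = 2 * k + 3 by eexists.
pose pair_sight a x := a < h -> sight_column g k (nth t0 s a) (nth t0 s (a + h)) x.
have [xw sight_xw] : exists xw : nat -> R, forall a, pair_sight a (xw a).
  apply: ClassicalEpsilon.choice => a; case: (ltnP a h) => ah.
    have /line_of_sightE [x ?] : line_of_sight k g (nth t0 s a) (nth t0 s (a + h)).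
      by apply: g_sight; rewrite nth_uniq // ?size_s; lia.
    by exists x.
  by exists R0; rewrite /pair_sight ltnNge ah.
have [|F [a0 [uniq_F F_lt a0F size_F btw]]] := side_extremum xw x0 (h := h); first by lia.
have /allP F_lt' := F_lt.
have := crossing_pairs_card uniq_s _ (incr t0) uniq_F F_lt a0F (sight_xw a0 (F_lt' a0 a0F)).
have in_F a : a \in F ->
    in_range (g (nth t0 s a)) (xw a0) /\ in_range (g (nth t0 s (a + h))) (xw a0).
  move=> aF; have [? ? _] := sight_xw a (F_lt' a aF).
  by split; apply: in_range_convex (common _) (btw a aF).
by move=> /(_ _ in_F); rewrite size_s; lia.
Qed.

End CliqueBound.

Lemma interval_four_cycle (A B C D : bar) :
  (exists x, in_range A x /\ in_range B x) -> (exists x, in_range B x /\ in_range C x) ->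
  (exists x, in_range C x /\ in_range D x) -> (exists x, in_range D x /\ in_range A x) ->
  (exists x, in_range A x /\ in_range C x) \/ (exists x, in_range B x /\ in_range D x).
Proof.
move=> [x1 [[? ?] [? ?]]] [x2 [[? ?] [? ?]]] [x3 [[? ?] [? ?]]] [x4 [[? ?] [? ?]]].
case: (Rle_dec (bx1 C) (bx2 A)) => ?; [case: (Rle_dec (bx1 A) (bx2 C)) => ?|].
- by left; exists (Rmax (bx1 A) (bx1 C)); rewrite /in_range /Rmax; case: Rle_dec; lra.
- by right; exists (bx2 C); rewrite /in_range; lra.
- by right; exists (bx2 A); rewrite /in_range; lra.
Qed.

Lemma card_setC3 (T : finType) (u v w : T) :
  u != v -> u != w -> v != w -> #|~: [set u; v; w]| = #|T| - 3.
Proof.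
move=> uv uw vw; have := cardsC [set u; v; w].
rewrite -setUA cardsU1 cards2 vw !inE negb_or uv uw /=; lia.
Qed.

Section FourCycle.

Variables (j : nat) (T : finType) (e : rel T) (g : T -> bar).
Hypothesis g_disj : forall u v, u != v -> bars_disjoint (g u) (g v).
Hypothesis e_sight : forall u v, e u v <-> u != v /\ line_of_sight j g u v.
Hypothesis few_vertices : #|T| <= j + 3.

(* Otherwise only the [#|T| - 3 <= j] bars other than those of [u], [v], [w] can block
   the segment from [u] to [v] at [x]. *)
Lemma nonadjacent_crossed (u v w : T) (x : R) :
  u != v -> u != w -> v != w -> ~~ e u v -> in_range (g u) x -> in_range (g v) x ->
  crosses (g w) x (by_ (g u)) (by_ (g v)).
Proof.
move=> uv uw vw /negP not_e ? ?; apply: NNPP => not_crossed; apply: not_e.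
apply/e_sight; split => //; apply/line_of_sightE; exists x; split => //.
exists (enum (~: [set u; v; w])); rewrite -cardE card_setC3 //; split; first by lia.
move=> c cu cv crossed; rewrite mem_enum !inE (negbTE cu) (negbTE cv) /=.
by apply/eqP => cw; apply: not_crossed; rewrite -cw.
Qed.

(* Both [w] and [z] cross the segment from [u] to [v] at [x], so the segment from [w] to
   [z] at [x] lies strictly inside it and misses [u] and [v]. *)
Lemma nonadjacent_pairs_apart (u v w z : T) (x : R) :
  u != v -> u != w -> u != z -> v != w -> v != z -> w != z ->
  ~~ e u v -> ~~ e w z -> in_range (g u) x -> in_range (g v) x -> False.
Proof.
move=> uv uw uz vw vz wz not_euv /negP not_ewz xu xv; apply: not_ewz.
have [xw wbtw] := nonadjacent_crossed uv uw vw not_euv xu xv.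
have [xz zbtw] := nonadjacent_crossed uv uz vz not_euv xu xv.
have neq_heights a b : a != b -> in_range (g a) x -> in_range (g b) x -> by_ (g a) <> by_ (g b).
  by move=> ab; apply: bars_disjoint_heights; apply: g_disj.
have := neq_heights _ _ uw xu xw; have := neq_heights _ _ uz xu xz.
have := neq_heights _ _ vw xv xw; have := neq_heights _ _ vz xv xz.
move: wbtw zbtw => /between_minmax wbtw /between_minmax zbtw ? ? ? ?.
apply/e_sight; split => //; apply/line_of_sightE; exists x; split => //.
exists (enum (~: [set u; v; w])); rewrite -cardE card_setC3 //; split; first by lia.
move=> c cw cz [_ /between_minmax cbtw]; rewrite mem_enum !inE (negbTE cw) /= orbF.
by apply/negP => /orP[] /eqP ec; rewrite ec in cbtw; lra.
Qed.

End FourCycle.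

Lemma induced_four_cycle_not_bar_visibility (j : nat) (T : finType) (e : rel T) (a b c d : T) :
  #|T| <= j + 3 -> a != b -> a != c -> a != d -> b != c -> b != d -> c != d ->
  e a b -> e b c -> e c d -> e d a -> ~~ e a c -> ~~ e b d ->
  ~ bar_k_visibility_graph j e.
Proof.
move=> small ab ac ad bc bd cd eab ebc ecd eda eac ebd [g [disj e_sight]].
have overlap u v : e u v -> exists x, in_range (g u) x /\ in_range (g v) x.
  by move=> /e_sight[_ /line_of_sightE[x [? ? _]]]; exists x.
have := interval_four_cycle (overlap _ _ eab) (overlap _ _ ebc) (overlap _ _ ecd) (overlap _ _ eda).
have cb : c != b by rewrite eq_sym.
case=> -[x [? ?]].
  by apply: (nonadjacent_pairs_apart (x := x) disj e_sight small ac ab ad cb cd bd eac ebd).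
have [ba da dc] : [/\ b != a, d != a & d != c] by split; rewrite eq_sym.
by apply: (nonadjacent_pairs_apart (x := x) disj e_sight small bd ba bc da dc ac ebd eac).
Qed.

Definition ord_interval (n a b : nat) : seq 'I_n := pmap insub (iota a (b - a)).

Lemma mem_ord_interval (n a b : nat) (c : 'I_n) : (c \in ord_interval n a b) = (a <= c < b).
Proof. by rewrite mem_pmap_sub mem_iota /=; apply/idP/idP; lia. Qed.

Lemma ord_interval_uniq (n a b : nat) : uniq (ord_interval n a b).
Proof. exact/pmap_sub_uniq/iota_uniq. Qed.

Lemma size_ord_interval_le (n a b : nat) : size (ord_interval n a b) <= b - a.
Proof. by rewrite size_pmap_sub -{2}(size_iota a (b - a)) count_size. Qed.

Lemma size_ord_interval (n a b : nat) : b <= n -> size (ord_interval n a b) = b - a.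
Proof.
move=> bn; rewrite size_pmap_sub -{2}(size_iota a (b - a)) -count_predT.
by apply: eq_in_count => c; rewrite mem_iota /=; lia.
Qed.

Lemma INR_leE (m p : nat) : Rle (INR m) (INR p) <-> m <= p.
Proof. by split => [/INR_le/leP|/leP/le_INR]. Qed.

Lemma between_INR (m p q : nat) :
  Rle (Rmin (INR m) (INR p)) (INR q) /\ Rle (INR q) (Rmax (INR m) (INR p)) <->
  minn m p <= q <= maxn m p.
Proof.
rewrite between_minmax !INR_leE.
by split => [[] [? ?]|?]; [lia | lia | case: (leqP m p) => ?; [left|right]; lia].
Qed.

Section StackedBars.

Variables (n : nat) (lft rgt : nat -> nat).
Hypothesis lft_lt_rgt : forall c, c < n -> lft c < rgt c.

Definition stacked_bar (c : 'I_n) : bar :=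
  @Bar (INR c) (INR (lft c)) (INR (rgt c)) (lt_INR _ _ (ltP (lft_lt_rgt (ltn_ord c)))).

Lemma stacked_bars_disjoint (u v : 'I_n) :
  u != v -> bars_disjoint (stacked_bar u) (stacked_bar v).
Proof.
by move=> /negP uv [p [[/= eu _] [/= ev _]]]; apply/uv/eqP/val_inj/INR_eq; rewrite -eu -ev.
Qed.

Lemma in_range_stacked (c : 'I_n) (x : nat) :
  in_range (stacked_bar c) (INR x) <-> lft c <= x <= rgt c.
Proof. by rewrite /in_range /= !INR_leE; split => [[-> ->]|/andP[]]. Qed.

Lemma stacked_sight (k : nat) (u v : 'I_n) (X a b : nat) :
  u < v -> lft u <= X <= rgt u -> lft v <= X <= rgt v -> b - a <= k ->
  (forall c, u < c < v -> lft c <= X <= rgt c -> a <= c < b) ->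
  line_of_sight k stacked_bar u v.
Proof.
move=> uv Xu Xv ab blockers; apply/line_of_sightE; exists (INR X).
split; try exact/in_range_stacked.
exists (ord_interval n a b); split; first exact: leq_trans (size_ord_interval_le _ _ _) ab.
move=> c cu cv [/in_range_stacked Xc /between_INR btw]; rewrite mem_ord_interval.
have : nat_of_ord c != u := cu; have : nat_of_ord c != v := cv.
by move=> ? ?; apply: blockers => //; lia.
Qed.

Lemma stacked_no_sight (k : nat) (u v : 'I_n) (a b : nat) :
  u < a -> b <= v -> k < b - a ->
  (forall c, a <= c < b -> lft c <= maxn (lft u) (lft v) /\ minn (rgt u) (rgt v) <= rgt c) ->
  ~ line_of_sight k stacked_bar u v.
Proof.
move=> ua bv ab covers /line_of_sightE [x sight]; have [[/= ? ?] [/= ? ?] _] := sight.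
have : size (ord_interval n a b) <= k.
  apply: (sight_column_blockers sight (ord_interval_uniq _ _ _)) => c.
  rewrite mem_ord_interval => cab; have [lc rc] := covers c cab.
  split; try by apply/negP => /eqP ec; move: cab; rewrite ec; lia.
  split; first split => /=.
  - case: (leqP (lft c) (lft u)) => [/INR_leE /= ?|?]; first lra.
    have /INR_leE /= ? : lft c <= lft v by lia.
    lra.
  - case: (leqP (rgt u) (rgt c)) => [/INR_leE /= ?|?]; first lra.
    have /INR_leE /= ? : rgt v <= rgt c by lia.
    lra.
  by apply/between_INR; lia.
by rewrite size_ord_interval; [lia | have := ltn_ord v; lia].
Qed.

End StackedBars.

Section VisibilityGraph.

Variables (k : nat) (T : finType) (f : T -> bar).

Definition visibility_rel : rel T := fun u v => (u != v) && `[< line_of_sight k f u v >].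

Lemma visibility_relP (u v : T) :
  reflect (u != v /\ line_of_sight k f u v) (visibility_rel u v).
Proof. by apply: (iffP andP) => -[? /asboolP]. Qed.

Lemma visibility_rel_simple : simple_graph visibility_rel.
Proof.
split=> [u v|u]; last by rewrite /visibility_rel eqxx.
by apply/visibility_relP/visibility_relP => -[? /line_of_sight_sym]; rewrite eq_sym.
Qed.

Lemma visibility_rel_bar_visibility :
  (forall u v, u != v -> bars_disjoint (f u) (f v)) ->
  bar_k_visibility_graph k visibility_rel.
Proof. by move=> disj; exists f; split => // u v; split => /visibility_relP. Qed.

End VisibilityGraph.

(* Bars at heights [0 .. 4k+3], in four blocks of [k + 1] consecutive heights. Every bar
   contains the column [8k + 8], where bars at most [k + 1] apart in height see each other.
   For a pair further apart, the endpoints are staggered so that at an endpoint of one of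
   the two bars only bars of a single block can lie between them (see [clique_sight]). *)
Definition clique_lft (k c : nat) : nat :=
  if c <= k then c else if c <= 2 * k + 1 then 2 * k + 2 + c else 5 * k + 4 - c.

Definition clique_rgt (k c : nat) : nat :=
  3 * (4 * k + 4) -
  (if c <= k then 3 * k + 3 + c else if c <= 3 * k + 2 then c else c - (3 * k + 3)).

Ltac clique_arith := unfold clique_lft, clique_rgt; repeat case: ifP => ?; lia.

Lemma clique_lft_lt_rgt (k c : nat) : c < 4 * k + 4 -> clique_lft k c < clique_rgt k c.
Proof. by clique_arith. Qed.

Definition clique_bar (k : nat) : 'I_(4 * k + 4) -> bar := stacked_bar (@clique_lft_lt_rgt k).

Lemma clique_sight (k : nat) (u v : 'I_(4 * k + 4)) :
  u < v -> line_of_sight k (@clique_bar k) u v.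
Proof.
move=> uv; have := ltn_ord u; have := ltn_ord v => vN uN.
have [near|far] := leqP v (u + k + 1).
  by apply: (stacked_sight _ (X := 8 * k + 8) (a := u.+1) (b := v)) => [|||| c];
    clique_arith.
case: (leqP u k) => uG; [case: (leqP v (2 * k + 1)) => vG | case: (leqP v (3 * k + 2)) => vG].
- by apply: (stacked_sight _ (X := clique_rgt k u) (a := k + 1) (b := v)) => [|||| c];
    clique_arith.
- by apply: (stacked_sight _ (X := clique_lft k v) (a := u.+1) (b := k + 1)) => [|||| c];
    clique_arith.
- by apply: (stacked_sight _ (X := clique_lft k u) (a := 2 * k + 2) (b := v)) => [|||| c];
    clique_arith.
- by apply: (stacked_sight _ (X := clique_rgt k u) (a := 3 * k + 3) (b := v)) => [|||| c];
    clique_arith.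
Qed.

Lemma complete_graph_bar_visibility (k : nat) :
  bar_k_visibility_graph k (fun u v : 'I_(4 * k + 4) => u != v).
Proof.
exists (@clique_bar k); split => [|u v]; first exact: stacked_bars_disjoint.
split=> [uv|[//]]; split => //; case: (ltngtP u v) => [|vu|/val_inj uv'].
- exact: clique_sight.
- exact/line_of_sight_sym/clique_sight.
- by rewrite uv' eqxx in uv.
Qed.

Lemma complete_graph_not_bar_visibility (i k : nat) : i < k ->
  ~ bar_k_visibility_graph i (fun u v : 'I_(4 * k + 4) => u != v).
Proof.
move=> ik [g [disj e_sight]].
have := bar_visibility_clique_card disj (fun u v uv => proj2 (proj1 (e_sight u v) uv)).
by rewrite card_ord; lia.
Qed.

(* Bars [0], [1], [i + 2], [i + 3] form an induced four-cycle in this order; the [i] bars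
   [2 .. i + 1] span the same columns as bar [1], so they block the diagonal [1 - (i + 3)]
   together with bar [i + 2], and the diagonal [0 - (i + 2)] together with bar [1]. *)
Definition four_cycle_lft (i c : nat) : nat := if c == 0 then 2 else if c <= i + 1 then 1 else 0.
Definition four_cycle_rgt (i c : nat) : nat := if c == 0 then 6 else if c <= i + 2 then 4 else 5.

Ltac four_cycle_arith := rewrite /four_cycle_lft /four_cycle_rgt /=; repeat case: ifP => ?; lia.

Lemma four_cycle_lft_lt_rgt (i c : nat) : four_cycle_lft i c < four_cycle_rgt i c.
Proof. by four_cycle_arith. Qed.

Definition four_cycle_bar (i : nat) : 'I_i.+4 -> bar :=
  stacked_bar (fun c _ => @four_cycle_lft_lt_rgt i c).

Definition four_cycle_graph (i : nat) : rel 'I_i.+4 := visibility_rel i (@four_cycle_bar i).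

Lemma four_cycle_graph_not_bar_visibility (i j : nat) : i < j ->
  ~ bar_k_visibility_graph j (@four_cycle_graph i).
Proof.
move=> ij.
pose v0 : 'I_i.+4 := inord 0; pose v1 : 'I_i.+4 := inord 1.
pose v2 : 'I_i.+4 := inord (i + 2); pose v3 : 'I_i.+4 := inord (i + 3).
have [e0 e1 e2 e3] : [/\ nat_of_ord v0 = 0, nat_of_ord v1 = 1,
    nat_of_ord v2 = i + 2 & nat_of_ord v3 = i + 3] by rewrite !inordK //; lia.
have ord_neq (u v : 'I_i.+4) : nat_of_ord u != v -> u != v by [].
have edge (u v : 'I_i.+4) : u != v -> line_of_sight i (@four_cycle_bar i) u v ->
    @four_cycle_graph i u v by move=> ? ?; apply/visibility_relP.
have non_edge (u v : 'I_i.+4) : ~ line_of_sight i (@four_cycle_bar i) u v ->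
    ~~ @four_cycle_graph i u v by move=> no; apply/negP => /visibility_relP[_].
apply: (induced_four_cycle_not_bar_visibility (a := v0) (b := v1) (c := v2) (d := v3)).
all: try (apply: ord_neq; rewrite ?e0 ?e1 ?e2 ?e3; lia).
- by rewrite card_ord; lia.
- apply: edge; [apply: ord_neq; rewrite e0 e1; lia|].
  by apply: (stacked_sight _ (X := 2) (a := 0) (b := 0)) => [|||| c];
    rewrite ?e0 ?e1; four_cycle_arith.
- apply: edge; [apply: ord_neq; rewrite e1 e2; lia|].
  by apply: (stacked_sight _ (X := 1) (a := 2) (b := i + 2)) => [|||| c];
    rewrite ?e1 ?e2; four_cycle_arith.
- apply: edge; [apply: ord_neq; rewrite e2 e3; lia|].
  by apply: (stacked_sight _ (X := 0) (a := 0) (b := 0)) => [|||| c];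
    rewrite ?e2 ?e3; four_cycle_arith.
- apply: edge; [apply: ord_neq; rewrite e3 e0; lia|]; apply: line_of_sight_sym.
  by apply: (stacked_sight _ (X := 5) (a := 0) (b := 0)) => [|||| c];
    rewrite ?e0 ?e3; four_cycle_arith.
- apply: non_edge.
  by apply: (stacked_no_sight _ (a := 1) (b := i + 2)) => [||| c];
    rewrite ?e0 ?e2; four_cycle_arith.
- apply: non_edge.
  by apply: (stacked_no_sight _ (a := 2) (b := i + 3)) => [||| c];
    rewrite ?e1 ?e3; four_cycle_arith.
Qed.

Lemma bar_visibility_classes_separated (i j : nat) : i < j ->
  (exists (T : finType) (e : rel T), simple_graph e /\
      bar_k_visibility_graph i e /\ ~ bar_k_visibility_graph j e) /\
  (exists (T : finType) (e : rel T), simple_graph e /\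
      bar_k_visibility_graph j e /\ ~ bar_k_visibility_graph i e).
Proof.
move=> ij; split.
  exists 'I_i.+4, (@four_cycle_graph i); split; first exact: visibility_rel_simple.
  split; last exact: four_cycle_graph_not_bar_visibility.
  exact/visibility_rel_bar_visibility/stacked_bars_disjoint.
exists 'I_(4 * j + 4), (fun u v => u != v); split.
  by split => [u v|u]; rewrite ?eqxx // eq_sym.
split; first exact: complete_graph_bar_visibility.
exact: complete_graph_not_bar_visibility.
Qed.

Theorem mainTheorem13 (i j : nat) : i <> j ->
  (exists (T : finType) (e : rel T), simple_graph e /\
      bar_k_visibility_graph i e /\ ~ bar_k_visibility_graph j e) /\
  (exists (T : finType) (e : rel T), simple_graph e /\
      bar_k_visibility_graph j e /\ ~ bar_k_visibility_graph i e).
Proof.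
move=> /eqP; case: ltngtP => // [ij|ji] _.
  exact: bar_visibility_classes_separated.
by have [? ?] := bar_visibility_classes_separated ji; split.
Qed.
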